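(* In the line network model (see context) with $\ell\ge2$ links and any erasure probabilities $p_1,\dots,p_\ell\in[0,1)$, the process $(Y_k)_{1\le k\le n}$ is stochastically increasing: for all $1\le k\le k'\le n$ and all $\omega\in\mathbb{N}^{\ell-1}$, $$\mathbb{P}(Y_k\succeq\omega)\le\mathbb{P}(Y_{k'}\succeq\omega),$$ where $\succeq$ is the componentwise order on $\mathbb{N}^{\ell-1}$ ($a\succeq b$ iff $a_j\ge b_j$ for all $j$).
   Context: Line network model. Fix integers $\ell\ge1$, $n\ge1$ and erasure probabilities $p_1,\dots,p_\ell\in[0,1)$. Let $\{z_{t,i}\}$ be independent Bernoulli variables with $\mathbb{P}(z_{t,i}=1)=1-p_i$. The rank $\rho_i(t)$ of node $N^{(i)}$ after $t$ steps satisfies $\rho_1(t)=n$, $\rho_i(0)=0$ for $i\ge2$, and $\rho_{i+1}(t)=\rho_{i+1}(t-1)+z_{t,i}\mathbf 1\{\rho_i(t-1)>\rho_{i+1}(t-1)\}$ for $t\ge1$, $1\le i\le\ell$; $\rho_i-\rho_{i+1}$ is the number of innovative packets at node $N^{(i)}$. For $1\le k\le n$ let $\sigma_k:=\min\{t:\rho_2(t)=k\}$ be the time step at which the $k$-th packet arrives at $N^{(2)}$, and let $Y_k:=(R^{(2)}_k,\dots,R^{(\ell)}_k)$ with $R^{(i)}_k:=\rho_i(\sigma_k)-\rho_{i+1}(\sigma_k)$, the numbers of innovative packets at nodes $N^{(2)},\dots,N^{(\ell)}$ at that moment (including packet $k$). *)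

From Stdlib Require Import Reals Arith List.
Open Scope R_scope.

Definition upd (b : nat -> bool) (j : nat) (v : bool) : nat -> bool :=
  fun x => if Nat.eqb x j then v else b x.

(* Esum m q F = E[F(b)] where b_0,...,b_{m-1} are independent Bernoulli
   variables with P(b_j = true) = q j, and b_j = false for j >= m.
   When F only depends on the coordinates < m this is the exact expectation. *)
Fixpoint Esum (m : nat) (q : nat -> R) (F : (nat -> bool) -> R) : R :=
  match m with
  | O => F (fun _ => false)
  | S m' => q m' * Esum m' q (fun b => F (upd b m' true))
          + (1 - q m') * Esum m' q (fun b => F (upd b m' false))
  end.

(* Coordinates: z_{t,i} (t >= 1, 1 <= i <= l) is stored at index (t-1)*l + (i-1). *)
Definition zof (l : nat) (b : nat -> bool) (t i : nat) : bool :=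
  b ((t - 1) * l + (i - 1))%nat.

(* Success probability of coordinate j : 1 - p_i with i = j mod l + 1. *)
Definition qof (l : nat) (p : nat -> R) (j : nat) : R :=
  1 - p (Nat.modulo j l + 1)%nat.

(* Ranks rho t i (meaningful for 1 <= i <= l+1):
   rho_1(t) = n, rho_i(0) = 0 for i >= 2,
   rho_{i+1}(t) = rho_{i+1}(t-1) + z_{t,i} * 1{rho_i(t-1) > rho_{i+1}(t-1)}. *)
Fixpoint rho (n : nat) (z : nat -> nat -> bool) (t : nat) (i : nat) : nat :=
  match t with
  | O => if Nat.leb i 1 then n else O
  | S t' =>
      match i with
      | O => n
      | S O => n
      | S i' => (rho n z t' i
                 + (if andb (z t i') (Nat.ltb (rho n z t' i) (rho n z t' i'))
                    then 1 else 0))%nat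
      end
  end.

(* t = sigma_k : first time with rho_2(t) = k. *)
Definition is_sigma (n : nat) (z : nat -> nat -> bool) (k t : nat) : bool :=
  andb (Nat.eqb (rho n z t 2) k)
       (forallb (fun s => negb (Nat.eqb (rho n z s 2) k)) (seq 0 t)).

(* Y ⪰ omega at time t: omega_j <= R^{(j+2)} = rho_{j+2}(t) - rho_{j+3}(t)
   for j = 0 .. l-2 (omega's first l-1 entries form the vector in N^{l-1}). *)
Definition Y_ge (l n : nat) (z : nat -> nat -> bool) (t : nat) (w : nat -> nat) : bool :=
  forallb (fun j => Nat.leb (w j) (rho n z t (j + 2) - rho n z t (j + 3)))
          (seq 0 (l - 1)).

(* P(sigma_k = t and Y_k ⪰ omega); the event depends only on z_{s,i},
   s <= t, i <= l, i.e. on coordinates < t*l. *)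
Definition prob_term (l n : nat) (p : nat -> R) (k : nat) (w : nat -> nat) (t : nat) : R :=
  Esum (t * l)%nat (qof l p)
    (fun b => if andb (is_sigma n (zof l b) k t) (Y_ge l n (zof l b) t w)
              then 1 else 0).

From Stdlib Require Import Reals List Lia Lra FunctionalExtensionality Classical.
Open Scope R_scope.

(* Let s = σ_1 be the step at which the first packet
   reaches N^(2).  The erasures after step s are independent of those up to
   step s and have the same (l-periodic) law, so they drive a fresh copy of
   the network.  Run side by side from time s, node N^(2) of the original
   network holds exactly one packet more than that of the copy, while every
   downstream backlog R^(i) of the copy stays below the original one
   (tandem queues are monotone).  Hence {σ_k = t, Y_k ⪰ ω} for the copy
   implies {σ_{k+1} = s+t, Y_{k+1} ⪰ ω} for the original.  Averaging over s,
   whose law is P(σ_1 = s+1) = p_1^s (1 - p_1), gives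
     (1 - p_1^N) Σ_{t<=T} P(σ_k = t, Y_k ⪰ ω) <= Σ_{u<=N+T} P(σ_{k+1} = u, Y_{k+1} ⪰ ω),
   and letting N, T -> ∞ yields P(Y_k ⪰ ω) <= P(Y_{k+1} ⪰ ω). *)

Section BernoulliExpectation.

Variable q : nat -> R.
Hypothesis q_prob : forall j, 0 <= q j <= 1.

Lemma Esum_ext m F G : (forall b, F b = G b) -> Esum m q F = Esum m q G.
Proof. intros H. replace G with F; [reflexivity | apply functional_extensionality; auto]. Qed.

Lemma Esum_const m c : Esum m q (fun _ => c) = c.
Proof. induction m; simpl; [reflexivity | rewrite IHm; ring]. Qed.

Lemma Esum_plus m F G : Esum m q (fun b => F b + G b) = Esum m q F + Esum m q G.
Proof.
  revert F G; induction m as [|m IH]; intros F G; simpl; [reflexivity|].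
  rewrite (IH (fun b => F (upd b m true))), (IH (fun b => F (upd b m false))); ring.
Qed.

Lemma Esum_scal m c F : Esum m q (fun b => c * F b) = c * Esum m q F.
Proof.
  revert F; induction m as [|m IH]; intros F; simpl; [reflexivity|].
  rewrite (IH (fun b => F (upd b m true))), (IH (fun b => F (upd b m false))); ring.
Qed.

Lemma Esum_le m F G : (forall b, F b <= G b) -> Esum m q F <= Esum m q G.
Proof.
  revert F G; induction m as [|m IH]; intros F G H; simpl; [apply H|].
  assert (Hm := q_prob m).
  apply Rplus_le_compat; apply Rmult_le_compat_l; try lra; apply IH; auto.
Qed.

Lemma Esum_nonneg m F : (forall b, 0 <= F b) -> 0 <= Esum m q F.
Proof. intros H. rewrite <- (Esum_const m 0). apply Esum_le, H. Qed.

Lemma Esum_sum m (F : nat -> (nat -> bool) -> R) N :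
  Esum m q (fun b => sum_f_R0 (fun i => F i b) N) = sum_f_R0 (fun i => Esum m q (F i)) N.
Proof.
  induction N as [|N IH]; simpl; [reflexivity|].
  rewrite (Esum_plus m (fun b => sum_f_R0 (fun i => F i b) N) (F (S N))), IH; reflexivity.
Qed.

Definition depends_on (m : nat) (F : (nat -> bool) -> R) : Prop :=
  forall b b', (forall j, (j < m)%nat -> b j = b' j) -> F b = F b'.

Definition shift (a : nat) (b : nat -> bool) : nat -> bool := fun j => b (a + j)%nat.

Lemma Esum_truncate m m' F : depends_on m F -> (m <= m')%nat -> Esum m' q F = Esum m q F.
Proof.
  intros HF Hm. replace m' with (m + (m' - m))%nat by lia.
  induction (m' - m)%nat as [|d IH]; [rewrite Nat.add_0_r; reflexivity|].
  rewrite Nat.add_succ_r; cbn [Esum].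
  rewrite (Esum_ext _ (fun b => F (upd b (m + d) true)) F),
          (Esum_ext _ (fun b => F (upd b (m + d) false)) F), IH; [ring| |];
  intros b; apply HF; intros j Hj; unfold upd; destruct (Nat.eqb_spec j (m + d)); auto; lia.
Qed.

Lemma shift_upd a c v b : shift a (upd b (a + c) v) = upd (shift a b) c v.
Proof.
  apply functional_extensionality; intros j; unfold shift, upd.
  destruct (Nat.eqb_spec (a + j) (a + c)); destruct (Nat.eqb_spec j c); auto; lia.
Qed.

Lemma Esum_indep a c F G : depends_on a F -> depends_on c G ->
  Esum (a + c) q (fun b => F b * G (shift a b))
  = Esum a q F * Esum c (fun j => q (a + j)%nat) G.
Proof.
  intros HF; revert G; induction c as [|c IH]; intros G HG.
  - rewrite Nat.add_0_r; cbn [Esum].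
    rewrite (Esum_ext _ _ (fun b => G (fun _ => false) * F b)), Esum_scal; [ring|].
    intros b; rewrite (HG (shift a b) (fun _ => false)); [ring | intros; lia].
  - rewrite Nat.add_succ_r; cbn [Esum].
    assert (Hv : forall v,
      Esum (a + c) q (fun b => F (upd b (a + c) v) * G (shift a (upd b (a + c) v)))
      = Esum a q F * Esum c (fun j => q (a + j)%nat) (fun x => G (upd x c v))).
    { intros v; rewrite <- IH.
      - apply Esum_ext; intros b; rewrite shift_upd; f_equal.
        apply HF; intros j Hj; unfold upd; destruct (Nat.eqb_spec j (a + c)); auto; lia.
      - intros x y Hxy; apply HG; intros j Hj; unfold upd.
        destruct (Nat.eqb_spec j c); auto; apply Hxy; lia. }
    rewrite !Hv; ring.
Qed.

End BernoulliExpectation.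

(* backlog n z t i = R^(i)(t) = rho_i(t) - rho_{i+1}(t), the number of
   innovative packets waiting at node N^(i). *)
Definition backlog (n : nat) (z : nat -> nat -> bool) (t i : nat) : nat :=
  (rho n z t i - rho n z t (S i))%nat.

Definition serve (c : bool) (x : nat) : nat := if (c && (0 <? x))%bool then 1 else 0.

Lemma serve_le c x : (serve c x <= x)%nat.
Proof. unfold serve; destruct c, (Nat.ltb_spec 0 x); simpl; lia. Qed.

Lemma serve_mono c x x' : (x' <= x)%nat -> (serve c x' <= serve c x)%nat.
Proof. unfold serve; destruct c, (Nat.ltb_spec 0 x), (Nat.ltb_spec 0 x'); simpl; lia. Qed.

Lemma queue_step_mono c x x' a a' : (x' <= x)%nat -> (a' <= a)%nat ->
  (x' + a' - serve c x' <= x + a - serve c x)%nat.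
Proof. unfold serve; destruct c, (Nat.ltb_spec 0 x), (Nat.ltb_spec 0 x'); simpl; lia. Qed.

Lemma rho_source n z t : rho n z t 1 = n.
Proof. destruct t; reflexivity. Qed.

Lemma rho_succ n z t i :
  rho n z (S t) (S (S i)) = (rho n z t (S (S i)) + serve (z (S t) (S i)) (backlog n z t (S i)))%nat.
Proof.
  cbn [rho]; unfold serve, backlog; f_equal.
  destruct (Nat.ltb_spec (rho n z t (S (S i))) (rho n z t (S i)));
  destruct (Nat.ltb_spec 0 (rho n z t (S i) - rho n z t (S (S i)))); auto; lia.
Qed.

Lemma rho_le_succ n z t i : (rho n z t i <= rho n z (S t) i)%nat.
Proof.
  destruct i as [|[|i]]; [destruct t; reflexivity | rewrite !rho_source; lia |].
  rewrite rho_succ; lia.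
Qed.

Lemma rho_mono n z u v i : (u <= v)%nat -> (rho n z u i <= rho n z v i)%nat.
Proof. induction 1; [lia | eapply Nat.le_trans; [eassumption | apply rho_le_succ]]. Qed.

Lemma rho_le_pred n z t i : (rho n z t (S (S i)) <= rho n z t (S i))%nat.
Proof.
  induction t as [|t IH]; [simpl; lia|].
  rewrite rho_succ; assert (Hs := serve_le (z (S t) (S i)) (backlog n z t (S i))).
  assert (Hmono := rho_le_succ n z t (S i)); unfold backlog in *; lia.
Qed.

Lemma backlog_succ n z t i :
  backlog n z (S t) (S (S i))
  = (backlog n z t (S (S i)) + serve (z (S t) (S i)) (backlog n z t (S i))
     - serve (z (S t) (S (S i))) (backlog n z t (S (S i))))%nat.
Proof.
  unfold backlog at 1; rewrite !rho_succ.
  assert (Hs := serve_le (z (S t) (S (S i))) (backlog n z t (S (S i)))).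
  assert (Hle := rho_le_pred n z t (S i)); unfold backlog in *; lia.
Qed.

(* Let z' be the erasure pattern z seen from time s on, when
   node N^(2) of the original network already holds m packets.  As long as
   the copy driven by z' has not exhausted the remaining n - m packets,
   node N^(2) of the original holds exactly m more packets than that of the
   copy, and every downstream backlog of the copy is at most the original one. *)
Lemma coupling n z z' s m :
  rho n z s 2 = m ->
  (forall t i, z' (S t) i = z (S (s + t)) i) ->
  forall t, (rho n z' t 2 + m <= n)%nat ->
  rho n z (s + t) 2 = (rho n z' t 2 + m)%nat /\
  forall i, (backlog n z' t (S (S i)) <= backlog n z (s + t) (S (S i)))%nat.
Proof.
  intros Hm Hz; induction t as [|t IH]; intros Hn.
  - rewrite Nat.add_0_r; split; [exact Hm | intros i; unfold backlog; simpl; lia].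
  - destruct IH as [E D]; [assert (X := rho_le_succ n z' t 2); lia|].
    rewrite Nat.add_succ_r.
    assert (Hin : serve (z (S (s + t)) 1%nat) (backlog n z' t 1)
                  = serve (z (S (s + t)) 1%nat) (backlog n z (s + t) 1)).
    { rewrite rho_succ, Hz in Hn; unfold backlog, serve in *; rewrite !rho_source in *.
      destruct (z (S (s + t)) 1%nat); simpl in *; [|reflexivity].
      destruct (Nat.ltb_spec 0 (n - rho n z' t 2)), (Nat.ltb_spec 0 (n - rho n z (s + t) 2));
        simpl in *; lia. }
    split.
    + rewrite !rho_succ, Hz, <- Hin; lia.
    + intros i; rewrite !backlog_succ, !Hz; apply queue_step_mono; [apply D|].
      destruct i as [|i]; [rewrite Hin; lia | apply serve_mono, D].
Qed.

Lemma is_sigma_spec n z k t : is_sigma n z k t = true <->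
  rho n z t 2 = k /\ forall u, (u < t)%nat -> rho n z u 2 <> k.
Proof.
  unfold is_sigma; rewrite Bool.andb_true_iff, Nat.eqb_eq, forallb_forall.
  split; intros [H1 H2]; split; auto; intros u Hu.
  - apply Nat.eqb_neq, Bool.negb_true_iff, H2, in_seq; lia.
  - rewrite in_seq in Hu; apply Bool.negb_true_iff, Nat.eqb_neq, H2; lia.
Qed.

Lemma Y_ge_spec l n z t w : Y_ge l n z t w = true <->
  forall j, (j < l - 1)%nat -> (w j <= backlog n z t (S (S j)))%nat.
Proof.
  unfold Y_ge, backlog; rewrite forallb_forall.
  assert (E : forall j, (j + 2 = S (S j) /\ j + 3 = S (S (S j)))%nat) by (intros; lia).
  split; intros H j Hj.
  - specialize (H j); destruct (E j) as [-> ->] in H; apply Nat.leb_le, H, in_seq; lia.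
  - rewrite in_seq in Hj; destruct (E j) as [-> ->]; apply Nat.leb_le, H; lia.
Qed.

Lemma zof_shift l b s t i : zof l (shift (s * l) b) (S t) i = zof l b (S (s + t)) i.
Proof. unfold zof, shift; f_equal; rewrite !Nat.sub_succ, !Nat.sub_0_r; nia. Qed.

Lemma event_shift l n b s k t w : (1 <= k)%nat -> (S k <= n)%nat ->
  is_sigma n (zof l b) 1 s = true ->
  is_sigma n (zof l (shift (s * l) b)) k t = true ->
  Y_ge l n (zof l (shift (s * l) b)) t w = true ->
  is_sigma n (zof l b) (S k) (s + t) = true /\ Y_ge l n (zof l b) (s + t) w = true.
Proof.
  rewrite !is_sigma_spec, !Y_ge_spec.
  intros Hk Hn [H1 H1min] [Hkt Hkmin] HY.
  assert (C := coupling n (zof l b) (zof l (shift (s * l) b)) s 1 H1 (zof_shift l b s)).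
  destruct (C t) as [E D]; [lia|].
  split; [split; [lia|] | intros j Hj; eapply Nat.le_trans; [apply HY, Hj | apply D]].
  intros u Hu; destruct (Nat.lt_ge_cases u s) as [Hus|Hus].
  - assert (X := rho_mono n (zof l b) u s 2 ltac:(lia)); lia.
  - replace u with (s + (u - s))%nat by lia.
    assert (X := rho_mono n (zof l (shift (s * l) b)) (u - s) t 2 ltac:(lia)).
    destruct (C (u - s)%nat) as [E' _]; [lia|].
    assert (Y := Hkmin (u - s)%nat ltac:(lia)); lia.
Qed.

Lemma rho_local l n b b' T : (forall j, (j < T * l)%nat -> b j = b' j) ->
  forall u i, (u <= T)%nat -> (i <= S l)%nat -> rho n (zof l b) u i = rho n (zof l b') u i.
Proof.
  intros H u; induction u as [|u IH]; intros i Hu Hi; [reflexivity|].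
  destruct i as [|[|i]]; [reflexivity | rewrite !rho_source; reflexivity|].
  rewrite !rho_succ; unfold backlog; rewrite !IH by lia.
  replace (zof l b (S u) (S i)) with (zof l b' (S u) (S i)); [reflexivity|].
  unfold zof; rewrite !Nat.sub_succ, !Nat.sub_0_r; symmetry; apply H; nia.
Qed.

Lemma events_local l n b b' T : (1 <= l)%nat -> (forall j, (j < T * l)%nat -> b j = b' j) ->
  forall k t w, (t <= T)%nat ->
  is_sigma n (zof l b) k t = is_sigma n (zof l b') k t /\
  Y_ge l n (zof l b) t w = Y_ge l n (zof l b') t w.
Proof.
  intros Hl H k t w Ht; assert (L := rho_local l n b b' T H).
  split; apply Bool.eq_iff_eq_true; rewrite ?is_sigma_spec, ?Y_ge_spec.
  - rewrite !(L t 2%nat) by lia.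
    split; intros [A B]; split; auto; intros u Hu; specialize (B u Hu);
      rewrite ?(L u 2%nat) in * by lia; auto.
  - unfold backlog; split; intros A j Hj; specialize (A j Hj); rewrite !(L t) in * by lia; auto.
Qed.

Definition event_ind (l n : nat) (w : nat -> nat) (k t : nat) (b : nat -> bool) : R :=
  if (is_sigma n (zof l b) k t && Y_ge l n (zof l b) t w)%bool then 1 else 0.

Definition first_arrival_ind (l n s : nat) (b : nat -> bool) : R :=
  if is_sigma n (zof l b) 1 s then 1 else 0.

Definition no_arrival_ind (l n s : nat) (b : nat -> bool) : R :=
  if rho n (zof l b) s 2 =? 0 then 1 else 0.

Lemma event_ind_01 l n w k t b : 0 <= event_ind l n w k t b <= 1.
Proof. unfold event_ind; destruct (_ && _)%bool; lra. Qed.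

Lemma event_ind_local l n w k t : (1 <= l)%nat -> depends_on (t * l) (event_ind l n w k t).
Proof.
  intros Hl b b' H; unfold event_ind.
  destruct (events_local l n b b' t Hl H k t w (le_n t)) as [-> ->]; reflexivity.
Qed.

Lemma first_arrival_local l n s : (1 <= l)%nat -> depends_on (s * l) (first_arrival_ind l n s).
Proof.
  intros Hl b b' H; unfold first_arrival_ind.
  destruct (events_local l n b b' s Hl H 1 s (fun _ => O) (le_n s)) as [-> _]; reflexivity.
Qed.

Lemma no_arrival_local l n s : (1 <= l)%nat -> depends_on (s * l) (no_arrival_ind l n s).
Proof.
  intros Hl b b' H; unfold no_arrival_ind.
  rewrite (rho_local l n b b' s H s 2) by lia; reflexivity.
Qed.

Lemma rho2_succ n z s :
  rho n z (S s) 2 = (rho n z s 2 + serve (z (S s) 1%nat) (n - rho n z s 2))%nat.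
Proof. rewrite rho_succ; unfold backlog; rewrite rho_source; reflexivity. Qed.

Lemma zof_link1 l b s : zof l b (S s) 1 = b (s * l)%nat.
Proof. unfold zof; simpl; rewrite Nat.sub_0_r, Nat.add_0_r; reflexivity. Qed.

Lemma no_arrival_succ l n s b : (1 <= n)%nat ->
  no_arrival_ind l n (S s) b = no_arrival_ind l n s b * (if b (s * l)%nat then 0 else 1).
Proof.
  intros Hn; unfold no_arrival_ind; rewrite rho2_succ, zof_link1.
  set (r := rho n (zof l b) s 2); assert (Hsrv := serve_le (b (s * l)%nat) (n - r)).
  destruct (b (s * l)%nat) eqn:Hb.
  - unfold serve at 1; simpl.
    destruct (Nat.eqb_spec r 0), (Nat.ltb_spec 0 (n - r)), (Nat.eqb_spec (r + 1) 0),
      (Nat.eqb_spec (r + 0) 0); try lia; ring.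
  - unfold serve; simpl; rewrite Nat.add_0_r; ring.
Qed.

Lemma first_arrival_zero l n b : first_arrival_ind l n 0 b = 0.
Proof. reflexivity. Qed.

Lemma first_arrival_succ l n s b : (1 <= n)%nat ->
  first_arrival_ind l n (S s) b = no_arrival_ind l n s b * (if b (s * l)%nat then 1 else 0).
Proof.
  intros Hn; unfold first_arrival_ind, no_arrival_ind.
  assert (Hstep := rho2_succ n (zof l b) s); rewrite zof_link1 in Hstep.
  assert (Hsrv := serve_le (b (s * l)%nat) (n - rho n (zof l b) s 2)).
  destruct (is_sigma n (zof l b) 1 (S s)) eqn:E.
  - apply is_sigma_spec in E as [E1 Emin]; assert (X := Emin s (Nat.lt_succ_diag_r s)).
    unfold serve in Hstep; destruct (b (s * l)%nat), (Nat.ltb_spec 0 (n - rho n (zof l b) s 2)),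
      (Nat.eqb_spec (rho n (zof l b) s 2) 0); simpl in *; try lia; ring.
  - destruct (Nat.eqb_spec (rho n (zof l b) s 2) 0) as [E0|E0]; [|ring].
    destruct (b (s * l)%nat) eqn:Hb; [exfalso|ring].
    assert (Hsig : is_sigma n (zof l b) 1 (S s) = true).
    { apply is_sigma_spec; split.
      - rewrite Hstep, E0; unfold serve; destruct (Nat.ltb_spec 0 (n - 0)); simpl; lia.
      - intros u Hu; assert (X := rho_mono n (zof l b) u s 2 ltac:(lia)); lia. }
    congruence.
Qed.

Section LinkProbabilities.

Variables (l : nat) (p : nat -> R).
Hypothesis l_pos : (1 <= l)%nat.
Hypothesis p_prob : forall i, (1 <= i <= l)%nat -> 0 <= p i < 1.

Lemma qof_prob j : 0 <= qof l p j <= 1.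
Proof.
  unfold qof; assert (X := Nat.mod_upper_bound j l ltac:(lia)).
  specialize (p_prob (j mod l + 1)%nat ltac:(lia)); lra.
Qed.

Lemma qof_periodic s : (fun j => qof l p (s * l + j)%nat) = qof l p.
Proof.
  apply functional_extensionality; intros j; unfold qof.
  rewrite (Nat.add_comm (s * l)), Nat.Div0.mod_add; reflexivity.
Qed.

Lemma Esum_next_link s F (g : bool -> R) : depends_on (s * l) F ->
  Esum (S s * l) (qof l p) (fun b => F b * g (b (s * l)%nat))
  = Esum (s * l) (qof l p) F * ((1 - p 1%nat) * g true + p 1%nat * g false).
Proof.
  intros HF; replace (S s * l)%nat with (s * l + l)%nat by lia.
  rewrite (Esum_ext _ _ _ (fun b => F b * (fun x => g (x O)) (shift (s * l) b)))
    by (intros b; unfold shift; rewrite Nat.add_0_r; reflexivity).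
  assert (Hg : forall m, (1 <= m)%nat -> depends_on m (fun x => g (x O)))
    by (intros m Hm x y H; rewrite (H O); [reflexivity | lia]).
  rewrite (Esum_indep _ (s * l) l F (fun x => g (x O))), qof_periodic,
    (Esum_truncate _ 1 l (fun x => g (x O))) by (auto || lia).
  cbn [Esum]; unfold upd, qof; simpl; rewrite Nat.Div0.mod_0_l; simpl; ring.
Qed.

Lemma prob_no_arrival n s : (1 <= n)%nat ->
  Esum (s * l) (qof l p) (no_arrival_ind l n s) = p 1%nat ^ s.
Proof.
  intros Hn; induction s as [|s IH]; [reflexivity|].
  rewrite (Esum_ext _ _ _ (fun b => no_arrival_ind l n s b * (if b (s * l)%nat then 0 else 1)))
    by (intros; apply no_arrival_succ, Hn).
  rewrite (Esum_next_link s _ (fun v => if v then 0 else 1)), IH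
    by (apply no_arrival_local, l_pos); simpl; ring.
Qed.

Lemma prob_first_arrival_le n N : (1 <= n)%nat ->
  sum_f_R0 (fun s => Esum (s * l) (qof l p) (first_arrival_ind l n s)) N = 1 - p 1%nat ^ N.
Proof.
  intros Hn; induction N as [|N IH].
  - cbn [sum_f_R0 Nat.mul Esum]; rewrite first_arrival_zero; ring.
  - rewrite tech5, IH.
    rewrite (Esum_ext _ _ _ (fun b => no_arrival_ind l n N b * (if b (N * l)%nat then 1 else 0)))
      by (intros; apply first_arrival_succ, Hn).
    rewrite (Esum_next_link N _ (fun v => if v then 1 else 0)), prob_no_arrival
      by (apply no_arrival_local, l_pos || exact Hn); simpl; ring.
Qed.

End LinkProbabilities.

Lemma sum_le_more_terms f N M : (forall i, 0 <= f i) -> (N <= M)%nat ->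
  sum_f_R0 f N <= sum_f_R0 f M.
Proof.
  intros Hf HNM; induction HNM as [|M _ IH]; [lra|].
  rewrite tech5; specialize (Hf (S M)); lra.
Qed.

Lemma sum_shift_le f a T : (forall i, 0 <= f i) ->
  sum_f_R0 (fun t => f (a + t)%nat) T <= sum_f_R0 f (a + T).
Proof.
  revert f; induction a as [|a IH]; intros f Hf; [apply Req_le, sum_eq; reflexivity|].
  rewrite (decomp_sum f (S a + T)) by lia; simpl.
  specialize (IH (fun u => f (S u)) (fun i => Hf (S i))); simpl in IH; specialize (Hf O); lra.
Qed.

Lemma sum_single (a g : nat -> R) s0 N : (forall s, s <> s0 -> a s = 0) ->
  sum_f_R0 (fun s => a s * g s) N = if (s0 <=? N)%nat then a s0 * g s0 else 0.
Proof.
  intros Ha; induction N as [|N IH]; simpl.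
  - destruct s0; simpl; [reflexivity | rewrite Ha by lia; ring].
  - rewrite IH; destruct (Nat.leb_spec s0 N), (Nat.leb_spec s0 (S N)); try lia.
    + rewrite (Ha (S N)) by lia; ring.
    + replace s0 with (S N) by lia; ring.
    + rewrite (Ha (S N)) by lia; ring.
Qed.

Lemma event_ind_shift_le l n w k s t b : (1 <= k)%nat -> (S k <= n)%nat ->
  is_sigma n (zof l b) 1 s = true ->
  event_ind l n w k t (shift (s * l) b) <= event_ind l n w (S k) (s + t) b.
Proof.
  intros Hk Hn H1; unfold event_ind.
  destruct (is_sigma n (zof l (shift (s * l) b)) k t) eqn:A,
    (Y_ge l n (zof l (shift (s * l) b)) t w) eqn:B; simpl;
    try (destruct (_ && _)%bool; lra).
  destruct (event_shift l n b s k t w Hk Hn H1 A B) as [-> ->]; simpl; lra.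
Qed.

(* Summing the pointwise coupling over s <= N and t <= T: at most one s has
   σ_1 = s, and then the times s+t are distinct and at most N+T. *)
Lemma coupled_sum_le l n w k b N T : (1 <= k)%nat -> (S k <= n)%nat ->
  sum_f_R0 (fun s => first_arrival_ind l n s b
                     * sum_f_R0 (fun t => event_ind l n w k t (shift (s * l) b)) T) N
  <= sum_f_R0 (fun u => event_ind l n w (S k) u b) (N + T).
Proof.
  intros Hk Hn.
  assert (Hpos : forall k' u, 0 <= event_ind l n w k' u b) by (intros; apply event_ind_01).
  destruct (classic (exists s0, is_sigma n (zof l b) 1 s0 = true)) as [[s0 Hs0]|Hnone].
  - rewrite (sum_single _ _ s0).
    + unfold first_arrival_ind at 1; rewrite Hs0, Rmult_1_l.
      destruct (Nat.leb_spec s0 N); [|apply cond_pos_sum; auto].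
      apply Rle_trans with (sum_f_R0 (fun t => event_ind l n w (S k) (s0 + t) b) T).
      { apply sum_Rle; intros; apply event_ind_shift_le; auto. }
      eapply Rle_trans; [apply (sum_shift_le (fun u => event_ind l n w (S k) u b)); auto |].
      apply sum_le_more_terms; auto; lia.
    + intros s Hs; unfold first_arrival_ind.
      destruct (is_sigma n (zof l b) 1 s) eqn:E; [exfalso|reflexivity].
      apply is_sigma_spec in E as [E Emin]; apply is_sigma_spec in Hs0 as [H0 H0min].
      destruct (Nat.lt_total s s0) as [L|[L|L]]; [eapply H0min | | eapply Emin]; eauto.
  - rewrite (sum_eq _ (fun _ => 0)).
    + rewrite sum_cte, Rmult_0_l; apply cond_pos_sum; auto.
    + intros s _; unfold first_arrival_ind.
      destruct (is_sigma n (zof l b) 1 s) eqn:E; [exfalso; eauto | ring].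
Qed.

Section OneStep.

Variables (l n : nat) (p : nat -> R) (w : nat -> nat).
Hypothesis l_pos : (1 <= l)%nat.
Hypothesis p_prob : forall i, (1 <= i <= l)%nat -> 0 <= p i < 1.

Lemma prob_term_nonneg k t : 0 <= prob_term l n p k w t.
Proof. apply Esum_nonneg; [apply qof_prob; auto | apply event_ind_01]. Qed.

Lemma sum_prob_term k U M : (U * l <= M)%nat ->
  sum_f_R0 (prob_term l n p k w) U
  = Esum M (qof l p) (fun b => sum_f_R0 (fun u => event_ind l n w k u b) U).
Proof.
  intros HM; rewrite Esum_sum; apply sum_eq; intros u Hu.
  symmetry; apply Esum_truncate; [apply event_ind_local, l_pos | nia].
Qed.

(* Independence of σ_1 from the erasures after σ_1, summed over s <= N and t <= T. *)
Lemma sum_coupled_expectation k N T M : (1 <= n)%nat -> ((N + T) * l <= M)%nat ->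
  Esum M (qof l p) (fun b => sum_f_R0 (fun s => first_arrival_ind l n s b
          * sum_f_R0 (fun t => event_ind l n w k t (shift (s * l) b)) T) N)
  = (1 - p 1%nat ^ N) * sum_f_R0 (prob_term l n p k w) T.
Proof.
  intros Hn HM.
  set (C := sum_f_R0 (prob_term l n p k w) T).
  rewrite <- (prob_first_arrival_le l p l_pos n N Hn), (Rmult_comm _ C), scal_sum, Esum_sum.
  apply sum_eq; intros s Hs; unfold C; rewrite scal_sum.
  rewrite (Esum_ext _ _ _ (fun b => sum_f_R0 (fun t =>
             first_arrival_ind l n s b * event_ind l n w k t (shift (s * l) b)) T))
    by (intros b; rewrite scal_sum; apply sum_eq; intros; ring).
  rewrite Esum_sum; apply sum_eq; intros t Ht.
  rewrite (Esum_truncate _ (s * l + t * l) M); [| | nia].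
  - rewrite (Esum_indep _ (s * l) (t * l) (first_arrival_ind l n s) (event_ind l n w k t)),
      qof_periodic by (apply first_arrival_local || apply event_ind_local; exact l_pos).
    unfold prob_term; fold (event_ind l n w k t); ring.
  - intros b b' H; f_equal.
    + apply first_arrival_local; [exact l_pos | intros; apply H; lia].
    + apply event_ind_local; [exact l_pos | intros j Hj; apply H; lia].
Qed.

Lemma one_step_ineq k N T : (1 <= k)%nat -> (S k <= n)%nat ->
  (1 - p 1%nat ^ N) * sum_f_R0 (prob_term l n p k w) T
  <= sum_f_R0 (prob_term l n p (S k) w) (N + T).
Proof.
  intros Hk Hn.
  rewrite <- (sum_coupled_expectation k N T ((N + T) * l)),
    (sum_prob_term (S k) (N + T) ((N + T) * l)) by lia.
  apply Esum_le; [apply qof_prob; auto | intros b; apply coupled_sum_le; auto].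
Qed.

End OneStep.

Lemma le_of_geometric_defect x A B : 0 <= x < 1 ->
  (forall N, (1 - x ^ N) * A <= B) -> A <= B.
Proof.
  intros Hx HB; destruct (Rle_lt_dec A B) as [|Hlt]; [assumption | exfalso].
  assert (HB0 := HB O); simpl in HB0.
  assert (Heps : 0 < (A - B) / A) by (apply Rdiv_lt_0_compat; lra).
  destruct (pow_lt_1_zero x ltac:(rewrite Rabs_right; lra) _ Heps) as [N HN].
  specialize (HN N (le_n N)); rewrite Rabs_right in HN by (apply Rle_ge, pow_le; lra).
  apply (Rmult_lt_compat_r A) in HN; [|lra].
  replace ((A - B) / A * A) with (A - B) in HN by (field; lra).
  specialize (HB N); lra.
Qed.

Section Monotonicity.

Variables (l n : nat) (p : nat -> R) (w : nat -> nat).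
Hypothesis l_pos : (1 <= l)%nat.
Hypothesis p_prob : forall i, (1 <= i <= l)%nat -> 0 <= p i < 1.

(* Any bound on the partial sums of P(σ_{k+1} = ·, Y_{k+1} ⪰ ω) bounds those
   of P(σ_k = ·, Y_k ⪰ ω): let N -> ∞ in the one-step inequality. *)
Lemma partial_sums_bound_step k B : (1 <= k)%nat -> (S k <= n)%nat ->
  (forall U, sum_f_R0 (prob_term l n p (S k) w) U <= B) ->
  forall T, sum_f_R0 (prob_term l n p k w) T <= B.
Proof.
  intros Hk Hn HB T; apply (le_of_geometric_defect (p 1%nat)); [apply p_prob; lia|].
  intros N; eapply Rle_trans; [apply one_step_ineq; auto | apply HB].
Qed.

Lemma partial_sums_bound k d B : (1 <= k)%nat -> (k + d <= n)%nat ->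
  (forall U, sum_f_R0 (prob_term l n p (k + d) w) U <= B) ->
  forall T, sum_f_R0 (prob_term l n p k w) T <= B.
Proof.
  revert k; induction d as [|d IH]; intros k Hk Hd HB.
  - rewrite Nat.add_0_r in HB; exact HB.
  - apply partial_sums_bound_step; [lia | lia |].
    apply IH; [lia | lia | rewrite Nat.add_succ_comm; exact HB].
Qed.

End Monotonicity.

(* P(Y_k ⪰ ω) = Σ_t P(σ_k = t, Y_k ⪰ ω) is nondecreasing in k. *)
Theorem proposition1 (l n : nat) (p : nat -> R)
  (hl : (2 <= l)%nat)
  (hp : forall i, (1 <= i <= l)%nat -> 0 <= p i < 1)
  (k k' : nat) (hk : (1 <= k <= k')%nat) (hk' : (k' <= n)%nat)
  (w : nat -> nat) (P P' : R)
  (HP : infinite_sum (prob_term l n p k w) P)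
  (HP' : infinite_sum (prob_term l n p k' w) P') :
  P <= P'.
Proof.
  assert (Hl : (1 <= l)%nat) by lia.
  assert (Hbound : forall T, sum_f_R0 (prob_term l n p k w) T <= P').
  { apply (partial_sums_bound l n p w Hl hp k (k' - k)); [lia | lia |].
    replace (k + (k' - k))%nat with k' by lia.
    intros U; apply sum_incr; [exact HP' | intros; apply prob_term_nonneg; auto]. }
  apply (@Rle_cv_lim _ (fun _ => P') _ _ Hbound HP).
  intros eps Heps; exists O; intros m _; unfold Rdist; rewrite Rminus_diag, Rabs_R0; exact Heps.
Qed.
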